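(* Assume the setting described in the context and suppose the event $\mathcal{E}$ holds. There is an absolute constant $C>0$ such that the following holds. Let $p\in\{1,\dots,k-1\}$ and $\gamma\in(0,1)$, let $S^{(p)}\subseteq[n]$ with $|S^{(p)}|=p$, let $\hat{\mathbf{e}}^{(p)}$ be a unit eigenvector for the largest eigenvalue of $\hat{\boldsymbol{\Gamma}}_{S^{(p)},S^{(p)}}$ zero-padded to $\mathbb{R}^n$, and let $S^{(p+1)}$ be the index set of the $p+1$ largest entries of $|\hat{\boldsymbol{\Gamma}}\hat{\mathbf{e}}^{(p)}|$. If $$ m\ \ge\ C\frac{(1+\theta)^2}{\theta^2\gamma^2(1-\sqrt\gamma)^2}(p+1)s^2(p+1)\log n\quad\text{and}\quad \|\mathbf{v}_{S^{(p)}}\|_2\ \ge\ \sqrt{\frac{\gamma}{s(p)}}, $$ then $$ \|\mathbf{v}_{S^{(p+1)}}\|_2\ \ge\ \sqrt{\frac{\gamma}{s(p+1)}}. $$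
   Context: Let $n\ge 2$, $m\ge1$, $\theta>0$, $k\in[n]$; $\mathbf{v}\in\mathbb{R}^n$ a unit vector with at most $k$ nonzero entries; $\mathbf{x}_1,\dots,\mathbf{x}_m$ i.i.d. $\mathcal{N}(\mathbf{0},\mathbf{I}_n+\theta\mathbf{v}\mathbf{v}^\top)$; $\hat{\boldsymbol{\Gamma}}=\frac1m\sum_i\mathbf{x}_i\mathbf{x}_i^\top-\mathbf{I}_n$; $\mathbf{W}=\hat{\boldsymbol{\Gamma}}-\theta\mathbf{v}\mathbf{v}^\top$. $\mathbf{v}_S$ is the restriction of $\mathbf{v}$ to $S$, $\mathbf{A}_{S,U}$ a submatrix, $\|\cdot\|_2$ Euclidean/spectral norm. $v_{(1)}\ge v_{(2)}\ge\cdots$ are the sorted absolute entries of $\mathbf{v}$ and $s(p)=(\sum_{i=1}^pv_{(i)}^2)^{-1}$ for $1\le p\le k$. Fix an absolute constant $C_0>0$; $\mathcal{E}$ is the event that $\|\mathbf{W}_{S,S}\|_2\le C_0(1+\theta)\sqrt{|S|\log n/m}$ for all nonempty $S\subseteq[n]$. Absolute constants do not depend on $n,m,k,p,\theta,\mathbf{v},\gamma$. *)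

From HB Require Import structures.
From mathcomp Require Import all_boot all_order all_algebra.
From mathcomp Require Import all_classical all_reals all_analysis.
Set Implicit Arguments. Unset Strict Implicit. Unset Printing Implicit Defensive.
Import Order.TTheory GRing.Theory Num.Theory.
Local Open Scope ring_scope.
Local Open Scope classical_set_scope.

Section Defs.
Variable R : realType.

Definition normS n (S : {set 'I_n}) (u : 'cV[R]_n) : R :=
  Num.sqrt (\sum_(i in S) u i 0 ^+ 2).

Definition norm2 n (u : 'cV[R]_n) : R := normS [set: 'I_n] u.

(* u vanishes outside S (zero-padded vector of R^S) *)
Definition supported_on n (S : {set 'I_n}) (u : 'cV[R]_n) : Prop :=
  forall i, i \notin S -> u i 0 = 0.

(* spectral (operator) norm of the principal submatrix A_{S,S}:
   sup of ||A_{S,S} y||_2 over unit y in R^S, with y written zero-padded *)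
Definition spec_norm_sub n (A : 'M[R]_n) (S : {set 'I_n}) : R :=
  sup [set r | exists u : 'cV[R]_n,
        [/\ supported_on S u, norm2 u = 1 & r = normS S (A *m u)]].

(* (mu, u) is an eigenpair of A_{S,S}, with the eigenvector u zero-padded *)
Definition is_sub_eigenpair n (A : 'M[R]_n) (S : {set 'I_n}) (mu : R)
  (u : 'cV[R]_n) : Prop :=
  [/\ supported_on S u, u != 0 &
      forall i, i \in S -> (A *m u) i 0 = mu * u i 0].

Definition top_sub_eigvec n (A : 'M[R]_n) (S : {set 'I_n}) (e : 'cV[R]_n)
  : Prop :=
  norm2 e = 1 /\
  exists lam : R, is_sub_eigenpair A S lam e /\
    forall mu u, is_sub_eigenpair A S mu u -> mu <= lam.

(* T is an index set of the q largest entries of |a| (ties broken arbitrarily) *)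
Definition top_abs_set n (a : 'cV[R]_n) (q : nat) (T : {set 'I_n}) : Prop :=
  #|T| = q /\ forall i j, i \in T -> j \notin T -> `|a j 0| <= `|a i 0|.

Definition sorted_abs n (v : 'cV[R]_n) : seq R :=
  sort (fun x y : R => y <= x) [seq `|v i 0| | i <- enum 'I_n].

Definition s_fun n (v : 'cV[R]_n) (p : nat) : R :=
  (\sum_(x <- take p (sorted_abs v)) x ^+ 2)^-1.

Definition Gamma_hat n m (x : 'I_m -> 'cV[R]_n) : 'M[R]_n :=
  (m%:R)^-1 *: (\sum_(i < m) x i *m (x i)^T) - 1%:M.

Definition W_mat n m (theta : R) (v : 'cV[R]_n) (x : 'I_m -> 'cV[R]_n)
  : 'M[R]_n := Gamma_hat x - theta *: (v *m v^T).

Definition event_E n m (C0 theta : R) (v : 'cV[R]_n) (x : 'I_m -> 'cV[R]_n)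
  : Prop :=
  forall S : {set 'I_n}, (0 < #|S|)%N ->
    spec_norm_sub (W_mat theta v x) S
      <= C0 * (1 + theta) * Num.sqrt (#|S|%:R * ln (n%:R : R) / m%:R).

Definition nnz n (v : 'cV[R]_n) : nat := #|[set i | v i 0 != 0]|.

End Defs.

From mathcomp Require Import all_boot all_order all_algebra.
From mathcomp Require Import all_classical all_reals all_analysis.
From mathcomp Require Import ring lra zify.
Set Implicit Arguments. Unset Strict Implicit. Unset Printing Implicit Defensive.
Import Order.TTheory GRing.Theory Num.Theory.
Import numFieldNormedType.Exports.
Local Open Scope ring_scope.

(* Write hat Gamma = W + theta v v^T, let e be the top eigenvector on S = S^(p),
   c = <v, e>, and let d = C0 (1 + theta) sqrt((2p+1) log n / m) bound the
   spectral norm of W on every set of at most 2p+1 coordinates (event E).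
   A maximizer of the Rayleigh quotient over the (compact) unit sphere of R^S
   is an eigenvector, so the top eigenvalue e^T hat Gamma e dominates the
   Rayleigh quotient of v_S; this gives theta c^2 >= theta ||v_S||^2 - 2d, i.e.
   the top eigenvector stays aligned with v.  Since hat Gamma e = W e + theta c v, the p+1 largest entries of
   |hat Gamma e| carry at least the mass of hat Gamma e on the p+1 largest
   entries U of |v|, so theta |c| (||v_U|| - ||v_S^(p+1)||) <= 2d.  The sample
   size makes d small against theta gamma (1 - sqrt gamma) ||v_U||^2, and
   elementary algebra with ||v_U||^2 = 1/s(p+1) <= 2/s(p) concludes. *)

Lemma cauchy_schwarz_sum (R : realDomainType) (I : finType) (P : pred I)
    (f g : I -> R) :
  (\sum_(i | P i) f i * g i) ^+ 2 <=
  (\sum_(i | P i) f i ^+ 2) * (\sum_(i | P i) g i ^+ 2).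
Proof.
set A := \sum_(i | P i) f i ^+ 2; set B := \sum_(i | P i) g i ^+ 2.
set C := \sum_(i | P i) f i * g i.
have B_ge0 : 0 <= B by apply: sumr_ge0 => i _; exact: sqr_ge0.
have sqr_sum_ge0 : 0 <= B * (A * B - C ^+ 2).
  have -> : B * (A * B - C ^+ 2) = \sum_(i | P i) (B * f i - C * g i) ^+ 2.
    rewrite (eq_bigr (fun i => B ^+ 2 * f i ^+ 2 - (2 * B * C) * (f i * g i)
      + C ^+ 2 * g i ^+ 2)); last by move=> i _; ring.
    rewrite big_split /= sumrB -!mulr_sumr -/A -/B -/C; ring.
  by apply: sumr_ge0 => i _; exact: sqr_ge0.
have [B0|B_neq0] := eqVneq B 0.
  have g0 i : P i -> g i = 0.
    move=> Pi; apply/eqP; rewrite -sqrf_eq0; apply/eqP.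
    by apply: (psumr_eq0P _ B0) => // j _; exact: sqr_ge0.
  by rewrite /C big1 ?expr0n ?B0 ?mulr0 // => i Pi; rewrite g0 ?mulr0.
have B_gt0 : 0 < B by rewrite lt_def B_neq0.
by rewrite -subr_ge0 -(pmulr_rge0 _ B_gt0).
Qed.

Lemma minkowski_sum (R : rcfType) (I : finType) (P : pred I) (f g : I -> R) :
  Num.sqrt (\sum_(i | P i) (f i + g i) ^+ 2) <=
  Num.sqrt (\sum_(i | P i) f i ^+ 2) + Num.sqrt (\sum_(i | P i) g i ^+ 2).
Proof.
set A := \sum_(i | P i) f i ^+ 2; set B := \sum_(i | P i) g i ^+ 2.
set C := \sum_(i | P i) f i * g i.
have A_ge0 : 0 <= A by apply: sumr_ge0 => i _; exact: sqr_ge0.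
have B_ge0 : 0 <= B by apply: sumr_ge0 => i _; exact: sqr_ge0.
have C_le : C <= Num.sqrt A * Num.sqrt B.
  rewrite -sqrtrM //; apply: le_trans (ler_norm C) _.
  by rewrite -sqrtr_sqr ler_sqrt ?mulr_ge0 //; exact: cauchy_schwarz_sum.
have -> : \sum_(i | P i) (f i + g i) ^+ 2 = A + 2 * C + B.
  rewrite (eq_bigr (fun i => f i ^+ 2 + 2 * (f i * g i) + g i ^+ 2));
    last by move=> i _; ring.
  by rewrite !big_split /= -mulr_sumr.
have sum_ge0 : 0 <= Num.sqrt A + Num.sqrt B by rewrite addr_ge0 ?sqrtr_ge0.
rewrite -[leRHS]ger0_norm // -sqrtr_sqr ler_sqrt ?sqr_ge0 //.
rewrite sqrrD !sqr_sqrtr //; lra.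
Qed.

Section RestrictedNorms.
Variables (R : realType) (n : nat).
Implicit Types (S T : {set 'I_n}) (u w : 'cV[R]_n).

Definition vdot u w : R := \sum_i u i 0 * w i 0.

Definition qform (A : 'M[R]_n) u : R := vdot u (A *m u).

Definition restrict S u : 'cV[R]_n := \col_i ((i \in S)%:R * u i 0).

Lemma vdotC u w : vdot u w = vdot w u.
Proof. by apply: eq_bigr => i _; rewrite mulrC. Qed.

Lemma vdotDr u w1 w2 : vdot u (w1 + w2) = vdot u w1 + vdot u w2.
Proof.
by rewrite /vdot -big_split; apply: eq_bigr => i _; rewrite mxE mulrDr.
Qed.

Lemma vdotZr u (c : R) w : vdot u (c *: w) = c * vdot u w.
Proof. by rewrite /vdot mulr_sumr; apply: eq_bigr => i _; rewrite mxE mulrCA. Qed.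

Lemma sum_supported S (F : 'I_n -> R) :
  (forall i, i \notin S -> F i = 0) -> \sum_(i in S) F i = \sum_i F i.
Proof.
by move=> F0; rewrite big_mkcond; apply: eq_bigr => i _; case: ifPn => // /F0.
Qed.

Lemma normS_ge0 S u : 0 <= normS S u.
Proof. exact: sqrtr_ge0. Qed.

Lemma normS0 S : normS S (0 : 'cV[R]_n) = 0.
Proof. by rewrite /normS big1 ?sqrtr0 // => i _; rewrite mxE expr0n. Qed.

Lemma normS_sqr S u : normS S u ^+ 2 = \sum_(i in S) u i 0 ^+ 2.
Proof. by rewrite sqr_sqrtr // sumr_ge0 // => i _; exact: sqr_ge0. Qed.

Lemma norm2_sqr u : norm2 u ^+ 2 = \sum_i u i 0 ^+ 2.
Proof. by rewrite normS_sqr; apply: eq_bigl => i; rewrite finset.in_setT. Qed.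

Lemma norm2_eq0 u : norm2 u = 0 -> u = 0.
Proof.
move=> u0; have /psumr_eq0P u2_eq0 : \sum_i u i 0 ^+ 2 = 0.
  by rewrite -norm2_sqr u0 expr0n.
apply/matrixP => i j; rewrite ord1 mxE; apply/eqP; rewrite -sqrf_eq0.
by apply/eqP/u2_eq0 => // k _; exact: sqr_ge0.
Qed.

Lemma normS_subset S T u : S \subset T -> normS S u <= normS T u.
Proof.
move=> /finset.setIidPr ST.
rewrite ler_sqrt ?sumr_ge0 // => [|i _]; last exact: sqr_ge0.
rewrite [leRHS](big_setID S) /= ST lerDl.
by apply: sumr_ge0 => i _; exact: sqr_ge0.
Qed.

Lemma normS_supported S u : supported_on S u -> normS S u = norm2 u.
Proof.
move=> Su; rewrite /norm2 /normS sum_supported => [|i /Su ->]; last first.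
  by rewrite expr0n.
by congr Num.sqrt; apply: eq_bigl => i; rewrite finset.in_setT.
Qed.

Lemma normSZ S (c : R) u : normS S (c *: u) = `|c| * normS S u.
Proof.
rewrite /normS (eq_bigr (fun i => c ^+ 2 * u i 0 ^+ 2)) => [|i _]; last first.
  by rewrite mxE exprMn.
by rewrite -mulr_sumr sqrtrM ?sqr_ge0 // sqrtr_sqr.
Qed.

Lemma normSN S u : normS S (- u) = normS S u.
Proof. by rewrite -scaleN1r normSZ normrN normr1 mul1r. Qed.

Lemma normSD_le S u w : normS S (u + w) <= normS S u + normS S w.
Proof.
rewrite /normS (eq_bigr (fun i => (u i 0 + w i 0) ^+ 2)) => [|i _].
  exact: (minkowski_sum (mem S)).
by rewrite mxE.
Qed.

Lemma supported_restrict S u : supported_on S (restrict S u).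
Proof. by move=> i iS; rewrite mxE (negbTE iS) mul0r. Qed.

Lemma norm2_restrict S u : norm2 (restrict S u) = normS S u.
Proof.
rewrite -(normS_supported (@supported_restrict S u)).
by congr Num.sqrt; apply: eq_bigr => i iS; rewrite mxE iS mul1r.
Qed.

Lemma vdot_restrict S u : vdot u (restrict S u) = normS S u ^+ 2.
Proof.
rewrite normS_sqr /vdot -(@sum_supported S) => [|i iS]; last first.
  by rewrite mxE (negbTE iS) mul0r mulr0.
by apply: eq_bigr => i iS; rewrite mxE iS mul1r expr2.
Qed.

Lemma vdot_abs_le S u w :
  supported_on S u -> `|vdot u w| <= norm2 u * normS S w.
Proof.
move=> Su; rewrite -(normS_supported Su) -sqrtrM ?sumr_ge0 // => [|i _].
  rewrite -sqrtr_sqr ler_sqrt ?mulr_ge0 ?sumr_ge0 // => [|i _|i _];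
    try exact: sqr_ge0.
  rewrite /vdot -(@sum_supported S) => [|i /Su ->]; last by rewrite mul0r.
  exact: (cauchy_schwarz_sum (mem S)).
exact: sqr_ge0.
Qed.

End RestrictedNorms.

Section SpectralNorm.
Variables (R : realType) (n : nat) (A : 'M[R]_n) (S : {set 'I_n}).
Implicit Types u : 'cV[R]_n.

Lemma normS_mulmx_le_spec u :
  supported_on S u -> norm2 u = 1 -> normS S (A *m u) <= spec_norm_sub A S.
Proof.
move=> Su u1; apply: ub_le_sup; last by exists u.
exists (Num.sqrt (\sum_i \sum_j A i j ^+ 2)) => _ [w [_ w1 ->]].
have w2 : \sum_j w j 0 ^+ 2 = 1 by rewrite -norm2_sqr w1 expr1n.
rewrite ler_sqrt; last by do 2![apply: sumr_ge0 => ? _]; exact: sqr_ge0.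
apply: (@le_trans _ _ (\sum_(i in S) \sum_j A i j ^+ 2)).
  apply: ler_sum => i _; rewrite mxE -[leRHS]mulr1 -w2.
  exact: (cauchy_schwarz_sum predT (A i)).
rewrite [leRHS](bigID (mem S)) /= lerDl.
by do 2![apply: sumr_ge0 => ? _]; exact: sqr_ge0.
Qed.

Lemma normS_mulmx_le u :
  supported_on S u -> normS S (A *m u) <= spec_norm_sub A S * norm2 u.
Proof.
move=> Su; have [/norm2_eq0 ->|u_neq0] := eqVneq (norm2 u) 0.
  by rewrite mulmx0 /norm2 !normS0 mulr0.
have u_gt0 : 0 < norm2 u by rewrite lt_def u_neq0 normS_ge0.
have Su' : supported_on S ((norm2 u)^-1 *: u).
  by move=> i /Su ui0; rewrite mxE ui0 mulr0.
have := normS_mulmx_le_spec Su'.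
rewrite /norm2 normSZ -scalemxAr normSZ ger0_norm ?invr_ge0 ?(ltW u_gt0) //.
by rewrite mulVf // ler_pdivrMl // mulrC => /(_ erefl).
Qed.

Lemma qform_abs_le u :
  supported_on S u -> `|qform A u| <= spec_norm_sub A S * norm2 u ^+ 2.
Proof.
move=> Su; apply: le_trans (vdot_abs_le _ Su) _.
rewrite mulrC expr2 mulrA ler_wpM2r ?normS_ge0 //; exact: normS_mulmx_le.
Qed.

End SpectralNorm.

Lemma eq0_of_quadratic_le0 (R : realFieldType) (x y : R) :
  (forall t : R, 2 * t * x + t ^+ 2 * y <= 0) -> x = 0.
Proof.
move=> quad_le0; pose d := `|y| + 1; pose t := x / d.
have d_gt0 : 0 < d by rewrite ltr_pwDr ?ltr01.
have x_eq : x = t * d by rewrite /t divfK // gt_eqF.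
have : t ^+ 2 * (2 * d + y) <= 0.
  have -> : t ^+ 2 * (2 * d + y) = 2 * t * x + t ^+ 2 * y.
    by rewrite x_eq; ring.
  exact: quad_le0.
have Ny_le : - y <= `|y| by rewrite -normrN ler_norm.
have Ny_ge0 := normr_ge0 y.
rewrite pmulr_lle0 /d; last by lra.
move=> t2_le0; have /eqP t0 : t == 0 by rewrite -sqrf_eq0 eq_le t2_le0 sqr_ge0.
by rewrite x_eq t0 mul0r.
Qed.

Lemma continuous_sum (R : realType) (T : topologicalType) (I : finType)
    (F : I -> T -> R) :
  (forall i, continuous (F i)) -> continuous (fun t => \sum_i F i t).
Proof.
move=> F_cont; rewrite -fct_sumE.
apply: (big_ind (fun g : T -> R => continuous g)) => // [|f g f_cont g_cont x].
  exact: cst_continuous.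
by apply: continuousD; [exact: f_cont | exact: g_cont].
Qed.

Section Rayleigh.
Variables (R : realType) (n : nat).
Implicit Types (A : 'M[R]_n) (S : {set 'I_n}) (u w : 'cV[R]_n).

(* Row vectors, so that the extreme value theorem [EVT_max_rV] applies. *)
Definition sub_sphere S : set 'rV[R]_n :=
  ((\bigcap_(i in [set i | i \notin S]) ((fun r => r 0 i) @^-1` [set 0]))
   `&` ((fun r => \sum_i r 0 i ^+ 2) @^-1` [set 1]))%classic.

Lemma sub_sphere_compact S : compact (sub_sphere S).
Proof.
have box := @rV_compact _ n _ (fun=> @segment_compact R (-1) 1).
have coord_cont i : continuous (fun r : 'rV[R]_n => r 0 i).
  exact: coord_continuous.
apply: (subclosed_compact _ box) => [|r [_ r1] i /=].
  apply: closedI.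
    apply: closed_bigI => i _; apply: preimage_closed; last exact: closed_eq.
    by move=> r _; exact: coord_cont.
  apply: preimage_closed; last exact: closed_eq.
  move=> r _; apply: continuous_sum => i.
  by move=> x; rewrite /GRing.exp /=; apply: continuousM; exact: coord_cont.
have ri2_le1 : r 0 i ^+ 2 <= 1.
  rewrite -r1 (bigD1 i) //= lerDl.
  by apply: sumr_ge0 => j _; exact: sqr_ge0.
rewrite (_ : r ord0 i = r 0 i) // in_itv /=; apply/andP; split; nra.
Qed.

Lemma sub_sphere_neq0 S : (0 < #|S|)%N -> (sub_sphere S !=set0)%classic.
Proof.
move=> S_gt0; have [i0 i0S] : exists i0, i0 \in S.
  by apply/set0Pn; rewrite -card_gt0.
exists (\row_j (j == i0)%:R); split => [i /= iS|/=].
  by rewrite mxE; case: eqP iS => // ->; rewrite i0S.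
rewrite (bigD1 i0) //= big1 ?addr0 => [|j /negbTE j_neq]; last first.
  by rewrite mxE j_neq expr0n.
by rewrite mxE eqxx expr1n.
Qed.

Lemma exists_rayleigh_max_sub A S : (0 < #|S|)%N ->
  exists2 u, supported_on S u /\ norm2 u = 1 &
    forall w, supported_on S w -> qform A w <= qform A u * norm2 w ^+ 2.
Proof.
move=> S_gt0.
pose Q (r : 'rV[R]_n) := \sum_i r 0 i * \sum_j A i j * r 0 j.
have QE w : Q w^T = qform A w.
  apply: eq_bigr => i _; rewrite !mxE; congr (_ * _).
  by apply: eq_bigr => j _; rewrite mxE.
have NE w : \sum_i w^T 0 i ^+ 2 = norm2 w ^+ 2.
  by rewrite norm2_sqr; apply: eq_bigr => i _; rewrite mxE.
have QZ c r : Q (c *: r) = c ^+ 2 * Q r.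
  rewrite /Q mulr_sumr; apply: eq_bigr => i _.
  rewrite (eq_bigr (fun j => c * (A i j * r 0 j))) => [|j _]; last first.
    by rewrite mxE; ring.
  by rewrite -mulr_sumr mxE; ring.
have Q_cont : continuous Q.
  apply: continuous_sum => i x; apply: continuousM; first exact: coord_continuous.
  apply: continuous_sum => j {}x; apply: continuousM; first exact: cst_continuous.
  exact: coord_continuous.
have [r /set_mem [r_supp r1] r_max] := EVT_max_rV (sub_sphere_neq0 S_gt0)
  (@sub_sphere_compact S) (continuous_subspaceT Q_cont).
exists r^T.
  split; first by move=> i iS; rewrite mxE; exact: r_supp.
  by apply/eqP; rewrite -(@eqrXn2 _ 2) ?normS_ge0 // -NE trmxK r1 expr1n.
move=> w w_supp; rewrite -!QE trmxK.
have [/norm2_eq0 ->|w_neq0] := eqVneq (norm2 w) 0.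
  rewrite trmx0 /norm2 normS0 expr0n mulr0 /Q big1 // => i _.
  by rewrite mxE mul0r.
have w_gt0 : 0 < norm2 w by rewrite lt_def w_neq0 normS_ge0.
have /mem_set : sub_sphere S ((norm2 w)^-1 *: w^T).
  split => [i /= iS|/=]; first by rewrite !mxE w_supp ?mulr0.
  rewrite (eq_bigr (fun i => (norm2 w)^-2 * w^T 0 i ^+ 2)) => [|i _]; last first.
    by rewrite mxE exprMn exprVn.
  by rewrite -mulr_sumr NE mulVf // expf_neq0.
by move=> /r_max; rewrite QZ exprVn ler_pdivrMl ?exprn_gt0 // mulrC.
Qed.

Lemma sub_eigenpair_qform A S mu u :
  is_sub_eigenpair A S mu u -> qform A u = mu * norm2 u ^+ 2.
Proof.
move=> [u_supp _ eig]; rewrite norm2_sqr mulr_sumr; apply: eq_bigr => i _.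
have [iS|iS] := boolP (i \in S); first by rewrite eig //; ring.
by rewrite u_supp // mul0r expr0n mulr0.
Qed.

Lemma sum_mul_delta (F : 'I_n -> R) i : \sum_j F j * (j == i)%:R = F i.
Proof.
by rewrite (bigD1 i) //= eqxx mulr1 big1 ?addr0 // => j /negbTE ->; rewrite mulr0.
Qed.

(* Perturbing the maximizer [u] along the basis vector of [i] yields a
   quadratic in [t] that is nonpositive, so its linear coefficient vanishes. *)
Lemma rayleigh_max_sub_eigen A S u :
  A^T = A -> supported_on S u -> norm2 u = 1 ->
  (forall w, supported_on S w -> qform A w <= qform A u * norm2 w ^+ 2) ->
  is_sub_eigenpair A S (qform A u) u.
Proof.
move=> A_sym u_supp u1 u_max; set mu := qform A u.
have Aij i j : A i j = A j i by rewrite -[in LHS]A_sym mxE.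
split=> // [|i iS].
  by apply: contra_eqN u1 => /eqP ->; rewrite /norm2 normS0 eq_sym oner_eq0.
apply/eqP; rewrite -subr_eq0; apply/eqP.
apply: (@eq0_of_quadratic_le0 _ _ (A i i - mu)) => t.
pose w : 'cV[R]_n := u + t *: \col_k (k == i)%:R.
have w_supp : supported_on S w.
  move=> k kS; rewrite !mxE u_supp // add0r.
  by case: eqP kS => [->|]; rewrite ?iS ?mulr0.
have wE k : w k 0 = u k 0 + t * (k == i)%:R by rewrite !mxE.
have AwE k : (A *m w) k 0 = (A *m u) k 0 + t * A k i.
  rewrite mulmxDr -scalemxAr [in LHS]mxE [X in _ + X]mxE mxE.
  congr (_ + _ * _); rewrite mxE -[RHS]sum_mul_delta.
  by apply: eq_bigr => j _; rewrite mxE.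
have qform_w : qform A w = mu + 2 * t * (A *m u) i 0 + t ^+ 2 * A i i.
  rewrite /qform /vdot (eq_bigr (fun k => u k 0 * (A *m u) k 0
    + t * (A i k * u k 0) + t * ((A *m u) k 0 * (k == i)%:R)
    + t ^+ 2 * (A i k * (k == i)%:R))) => [|k _]; last first.
    by rewrite wE AwE (Aij k i); ring.
  rewrite !big_split /= -!mulr_sumr !sum_mul_delta.
  have -> : \sum_k A i k * u k 0 = (A *m u) i 0 by rewrite mxE.
  by rewrite [\sum_k _](_ : _ = mu) //; ring.
have norm_w : norm2 w ^+ 2 = 1 + 2 * t * u i 0 + t ^+ 2.
  rewrite norm2_sqr (eq_bigr (fun k => u k 0 ^+ 2
    + 2 * t * (u k 0 * (k == i)%:R) + t ^+ 2 * (1 * (k == i)%:R))) => [|k _].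
    have delta_sum : \sum_k (k == i)%:R = 1 :> R.
      rewrite -[RHS](sum_mul_delta (fun=> 1) i).
      by apply: eq_bigr => k _; rewrite mul1r.
    rewrite !big_split /= -!mulr_sumr !sum_mul_delta -norm2_sqr u1 delta_sum.
    ring.
  by rewrite wE; case: (k == i); rewrite ?(mulr1, mulr0, addr0); ring.
have -> : 2 * t * ((A *m u) i 0 - mu * u i 0) + t ^+ 2 * (A i i - mu)
    = qform A w - mu * norm2 w ^+ 2 by rewrite qform_w norm_w; ring.
by rewrite subr_le0; exact: u_max.
Qed.

Lemma top_sub_eigvec_rayleigh A S e w :
  A^T = A -> top_sub_eigvec A S e -> supported_on S w ->
  qform A w <= qform A e * norm2 w ^+ 2.
Proof.
move=> A_sym [e1 [lam [e_eig lam_max]]] w_supp.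
have S_gt0 : (0 < #|S|)%N.
  have [e_supp e_neq0 _] := e_eig; rewrite card_gt0; apply: contra_neq e_neq0.
  by move=> S0; apply/matrixP => i j; rewrite ord1 mxE e_supp // S0 inE.
have [u [u_supp u1] u_max] := exists_rayleigh_max_sub A S_gt0.
have := lam_max _ _ (rayleigh_max_sub_eigen A_sym u_supp u1 u_max).
rewrite (sub_eigenpair_qform e_eig) e1 expr1n mulr1 => mu_le_lam.
apply: le_trans (u_max w w_supp) _.
by rewrite ler_wpM2r ?sqr_ge0.
Qed.

End Rayleigh.

Section TopEntries.
Variables (R : realType) (n : nat).
Implicit Types (v a : 'cV[R]_n) (U T : {set 'I_n}).

Definition top_sqr_sum v q : R := \sum_(x <- take q (sorted_abs v)) x ^+ 2.

Lemma s_funE v q : s_fun v q = (top_sqr_sum v q)^-1.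
Proof. by []. Qed.

Lemma size_sorted_abs v : size (sorted_abs v) = n.
Proof. by rewrite size_sort size_map size_enum_ord. Qed.

Lemma sorted_abs_head v x s :
  sorted_abs v = x :: s -> {in x :: s, forall y, 0 <= y <= x}.
Proof.
move=> vE y; rewrite -vE => y_in; apply/andP; split.
  by move: y_in; rewrite mem_sort => /mapP [i _ ->].
have ge_trans : transitive (fun x y : R => y <= x).
  by move=> ? ? ? h1 h2; exact: le_trans h2 h1.
have x_path : sorted (fun x y : R => y <= x) (x :: s).
  by rewrite -vE; apply: sort_sorted => a b; rewrite orbC le_total.
move: y_in; rewrite vE inE => /predU1P [->//|y_in].
by move/allP: (order_path_min ge_trans x_path); apply.
Qed.

Lemma top_sqr_sum_gt0 v q : v != 0 -> (0 < q)%N -> 0 < top_sqr_sum v q.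
Proof.
move=> v_neq0; case: q => // q _; rewrite /top_sqr_sum.
case vE: (sorted_abs v) => [|x s].
  have := size_sorted_abs v; rewrite vE => /= n0.
  case/eqP: v_neq0; apply/matrixP => i; exfalso.
  by move: (ltn_ord i); rewrite -[X in (_ < X)%N]n0.
have x_max := sorted_abs_head vE.
have /andP [x_ge0 _] := x_max x (mem_head x s).
have x_gt0 : 0 < x.
  rewrite lt_def x_ge0 andbT; apply: contra_neq v_neq0 => x0.
  apply/matrixP => i j; rewrite ord1 mxE; apply/normr0_eq0/eqP.
  rewrite eq_le normr_ge0 andbT -x0.
  have /andP [_ ->] // : 0 <= `|v i 0| <= x.
  by apply: x_max; rewrite -vE mem_sort; apply: map_f; rewrite mem_enum.
rewrite /= big_cons ltr_pwDl ?exprn_gt0 // sumr_ge0 // => y _; exact: sqr_ge0.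
Qed.

Lemma top_sqr_sum_succ_le v q :
  (0 < q)%N -> top_sqr_sum v q.+1 <= 2 * top_sqr_sum v q.
Proof.
case: q => // q _; rewrite /top_sqr_sum.
case vE: (sorted_abs v) => [|x s]; first by rewrite big_nil mulr0.
have x_max := sorted_abs_head vE.
have sum_ge0 : 0 <= \sum_(y <- take q s) y ^+ 2.
  by apply: sumr_ge0 => y _; exact: sqr_ge0.
rewrite /= !big_cons; have [qs|sq] := ltnP q (size s); last first.
  rewrite !take_oversize ?(leq_trans sq) // in sum_ge0 *.
  by have := sqr_ge0 x; lra.
rewrite (take_nth 0 qs) -cats1 big_cat big_seq1 /=.
have /andP [y_ge0 y_le] : 0 <= s`_q <= x by rewrite x_max // inE mem_nth ?orbT.
have /andP [x_ge0 _] := x_max x (mem_head x s).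
have : s`_q ^+ 2 <= x ^+ 2 by rewrite ler_sqr ?nnegrE.
lra.
Qed.

Lemma top_sqr_sum_set v q :
  (q <= n)%N ->
  exists2 U : {set 'I_n}, #|U| = q & normS U v = Num.sqrt (top_sqr_sum v q).
Proof.
move=> qn; rewrite /top_sqr_sum /sorted_abs sort_map.
set idx := sort _ (enum 'I_n).
have idx_uniq : uniq idx by rewrite sort_uniq enum_uniq.
exists [set i in take q idx].
  rewrite cardsE; move/card_uniqP: (take_uniq q idx_uniq) => ->.
  by rewrite size_takel // size_sort size_enum_ord.
rewrite -map_take big_map big_uniq ?take_uniq //; congr Num.sqrt.
by apply: eq_big => [i|i _]; rewrite ?inE // real_normK ?num_real.
Qed.

Lemma top_abs_set_normS a q T U :
  top_abs_set a q T -> #|U| = q -> normS U a <= normS T a.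
Proof.
move=> [card_T T_top] card_U.
have card_TU : #|T :\: U| = #|U :\: T|.
  by rewrite !cardsD card_T card_U finset.setIC.
set k := #|U :\: T| in card_TU *.
have exchange_ge0 :
    0 <= \sum_(i in T :\: U) \sum_(j in U :\: T) (a i 0 ^+ 2 - a j 0 ^+ 2).
  apply: sumr_ge0 => i; rewrite inE => /andP [iU iT].
  apply: sumr_ge0 => j; rewrite inE => /andP [jT jU].
  rewrite subr_ge0 -[a i 0 ^+ 2]real_normK ?num_real //.
  by rewrite -[a j 0 ^+ 2]real_normK ?num_real // ler_sqr ?nnegrE ?T_top.
move: exchange_ge0.
rewrite (eq_bigr (fun i => a i 0 ^+ 2 *+ k - \sum_(j in U :\: T) a j 0 ^+ 2));
  last by move=> i _; rewrite sumrB sumr_const.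
rewrite sumrB sumrMnl sumr_const card_TU -mulrnBl.
have norm_le :
    \sum_(i in U :\: T) a i 0 ^+ 2 <= \sum_(i in T :\: U) a i 0 ^+ 2 ->
    normS U a <= normS T a.
  move=> sum_le; rewrite ler_sqrt ?sumr_ge0 // => [|i _]; last exact: sqr_ge0.
  by rewrite (big_setID T) [leRHS](big_setID U) finset.setIC lerD2l.
have [k0 _|k_gt0] := posnP k; last by rewrite pmulrn_lge0 // subr_ge0.
apply: norm_le; move/cards0_eq: k0 => ->; rewrite big_set0.
by apply: sumr_ge0 => i _; exact: sqr_ge0.
Qed.

End TopEntries.

Section SpikedModel.
Variables (R : realType) (n : nat) (W : 'M[R]_n) (v : 'cV[R]_n) (theta : R).
Hypotheses (W_sym : W^T = W) (theta_ge0 : 0 <= theta).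
Implicit Types (S T U : {set 'I_n}) (u e : 'cV[R]_n).

Let G := W + theta *: (v *m v^T).

Lemma spiked_mulmx u : G *m u = W *m u + (theta * vdot v u) *: v.
Proof.
apply/matrixP => i j.
rewrite ord1 mulmxDl -scalemxAl -mulmxA !mxE big_ord1 !mxE.
have -> : \sum_k v^T 0 k * u k 0 = vdot v u by apply: eq_bigr => k _; rewrite mxE.
ring.
Qed.

Lemma spiked_qform u : qform G u = qform W u + theta * vdot v u ^+ 2.
Proof. by rewrite /qform spiked_mulmx vdotDr vdotZr [vdot u v]vdotC mulrA. Qed.

Lemma spiked_sym : G^T = G.
Proof. by rewrite /G linearD linearZ /= trmx_mul trmxK W_sym. Qed.

Lemma top_eigvec_overlap S e d :
  spec_norm_sub W S <= d -> top_sub_eigvec G S e ->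
  theta * normS S v ^+ 2 - 2 * d <= theta * vdot v e ^+ 2.
Proof.
move=> W_le e_top; have [e1 [_ [[e_supp _ _] _]]] := e_top.
have d_ge0 : 0 <= d.
  apply: le_trans W_le; apply: le_trans (normS_mulmx_le_spec W e_supp e1).
  exact: normS_ge0.
have := top_sub_eigvec_rayleigh spiked_sym e_top (@supported_restrict _ _ S v).
rewrite !spiked_qform norm2_restrict vdot_restrict.
set alpha := normS S v ^+ 2; set c := vdot v e.
have alpha_ge0 : 0 <= alpha by exact: sqr_ge0.
have := qform_abs_le W (@supported_restrict _ _ S v).
have := qform_abs_le W e_supp; rewrite norm2_restrict -/alpha e1 expr1n mulr1.
rewrite !ler_norml => /andP [_ qe_le] /andP [qw_ge _] rayleigh.
have spec_alpha : spec_norm_sub W S * alpha <= d * alpha by rewrite ler_wpM2r.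
have theta_c2 : 0 <= theta * c ^+ 2 by rewrite mulr_ge0 ?sqr_ge0.
have [alpha0|alpha_gt0] := eqVneq alpha 0; first by rewrite alpha0; lra.
nra.
Qed.

Lemma top_abs_set_overlap S T U e d q :
  supported_on S e -> norm2 e = 1 -> top_abs_set (G *m e) q T -> #|U| = q ->
  spec_norm_sub W (T :|: S) <= d -> spec_norm_sub W (U :|: S) <= d ->
  theta * `|vdot v e| * (normS U v - normS T v) <= 2 * d.
Proof.
move=> e_supp e1 T_top card_U WT_le WU_le.
have We_le X : spec_norm_sub W (X :|: S) <= d -> normS X (W *m e) <= d.
  move=> WX_le; apply: le_trans (normS_subset (W *m e) (finset.subsetUl X S)) _.
  have XS_supp : supported_on (X :|: S) e.
    by move=> i; rewrite inE negb_or => /andP [_ /e_supp].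
  by apply: le_trans (normS_mulmx_le W XS_supp) _; rewrite e1 mulr1.
have := top_abs_set_normS T_top card_U; rewrite spiked_mulmx.
set c := theta * vdot v e.
have c_abs : `|c| = theta * `|vdot v e| by rewrite normrM ger0_norm.
have upper := normSD_le T (W *m e) (c *: v).
have lower := normSD_le U (W *m e + c *: v) (- (W *m e)).
rewrite addrAC subrr add0r normSN in lower.
rewrite !normSZ c_abs in upper lower.
have := We_le T WT_le; have := We_le U WU_le.
lra.
Qed.

End SpikedModel.

(* The first two inequalities force c >= g tau / 2, whereas y < g tau would
   turn the last two into c <= g^2 tau / 4. *)
Lemma recovery_arith (R : realFieldType) (theta g tau a c y d : R) :
  0 < theta -> 0 < g < 1 -> 0 < tau -> 0 <= c ->
  g ^+ 2 * tau ^+ 2 <= 2 * a ^+ 2 ->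
  theta * a ^+ 2 - 2 * d <= theta * c ^+ 2 ->
  theta * c * (tau - y) <= 2 * d ->
  8 * d <= theta * g ^+ 2 * (1 - g) * tau ^+ 2 ->
  g * tau <= y.
Proof.
move=> theta_gt0 /andP [g_gt0 g_lt1] tau_gt0 c_ge0 a_ge overlap_ge gap_le d_le.
have gtau_gt0 : 0 < g * tau by rewrite mulr_gt0.
have theta_c2 : theta * (g * tau) ^+ 2 <= theta * (2 * c) ^+ 2.
  have : 0 <= theta * (g ^+ 2 * tau ^+ 2) * g.
    by rewrite !mulr_ge0 ?sqr_ge0 // ltW.
  have : theta * (g ^+ 2 * tau ^+ 2) <= theta * (2 * a ^+ 2) by rewrite ler_pM2l.
  rewrite !exprMn; nra.
have c_ge : g * tau <= 2 * c.
  rewrite -ler_sqr ?nnegrE ?(ltW gtau_gt0) ?mulr_ge0 //.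
  by rewrite -(ler_pM2l theta_gt0).
rewrite leNgt; apply/negP => y_lt.
have shift : theta * c * ((1 - g) * tau) <= theta * c * (tau - y).
  by rewrite ler_wpM2l ?mulr_ge0 ?ltW //; lra.
have pos : 0 < theta * (1 - g) * tau by rewrite !mulr_gt0 // subr_gt0.
have four_c : 4 * c <= g ^+ 2 * tau.
  rewrite -(ler_pM2l pos).
  have -> : theta * (1 - g) * tau * (4 * c)
      = 4 * (theta * c * ((1 - g) * tau)) by ring.
  have -> : theta * (1 - g) * tau * (g ^+ 2 * tau)
      = theta * g ^+ 2 * (1 - g) * tau ^+ 2 by ring.
  lra.
have : g * (g * tau) < 1 * (g * tau) by rewrite ltr_pM2r.
rewrite mul1r mulrA -expr2; lra.
Qed.

Lemma spiked_support_recovery (R : realType) n (W : 'M[R]_n) (v : 'cV[R]_n)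
    (theta gamma d : R) (S T : {set 'I_n}) (e : 'cV[R]_n) (p : nat) :
  W^T = W -> 0 < theta -> 0 < gamma < 1 -> v != 0 ->
  (0 < p)%N -> (p < n)%N -> #|S| = p ->
  (forall X : {set 'I_n}, (0 < #|X|)%N -> (#|X| <= (2 * p).+1)%N ->
    spec_norm_sub W X <= d) ->
  top_sub_eigvec (W + theta *: (v *m v^T)) S e ->
  top_abs_set ((W + theta *: (v *m v^T)) *m e) p.+1 T ->
  8 * d <= theta * gamma * (1 - Num.sqrt gamma) * top_sqr_sum v p.+1 ->
  Num.sqrt (gamma * top_sqr_sum v p) <= normS S v ->
  Num.sqrt (gamma * top_sqr_sum v p.+1) <= normS T v.
Proof.
move=> W_sym theta_gt0 /andP [gamma_gt0 gamma_lt1] v_neq0 p_gt0 p_lt_n card_S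
  W_le e_top T_top noise v_S.
have [e1 [_ [[e_supp _ _] _]]] := e_top.
have WUS_le (X : {set 'I_n}) : #|X| = p.+1 -> spec_norm_sub W (X :|: S) <= d.
  move=> card_X; apply: W_le.
    by rewrite (leq_trans _ (subset_leq_card (finset.subsetUl X S))) ?card_X.
  by rewrite (leq_trans (leq_card_setU X S)) // card_X card_S; lia.
have [U card_U v_U] := top_sqr_sum_set v p_lt_n.
have WS_le : spec_norm_sub W S <= d by apply: W_le; rewrite card_S //; lia.
have overlap := top_eigvec_overlap W_sym (ltW theta_gt0) WS_le e_top.
have gap := top_abs_set_overlap (ltW theta_gt0) e_supp e1 T_top card_U
  (WUS_le T T_top.1) (WUS_le U card_U).
have tp_gt0 := top_sqr_sum_gt0 v_neq0 p_gt0.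
have tq_gt0 := top_sqr_sum_gt0 v_neq0 (ltn0Sn p).
have tq_le := top_sqr_sum_succ_le v p_gt0.
have v_S2 : gamma * top_sqr_sum v p <= normS S v ^+ 2.
  rewrite -[leLHS]sqr_sqrtr; last by rewrite mulr_ge0 ?ltW.
  by rewrite ler_sqr ?nnegrE ?sqrtr_ge0 ?normS_ge0.
rewrite sqrtrM; last exact: ltW.
apply: (recovery_arith (a := normS S v) (d := d) theta_gt0 _ _
  (normr_ge0 (vdot v e))).
- by rewrite sqrtr_gt0 gamma_gt0 -sqrtr1 ltr_sqrt.
- by rewrite sqrtr_gt0.
- by rewrite (sqr_sqrtr (ltW gamma_gt0)) (sqr_sqrtr (ltW tq_gt0)); nra.
- by rewrite real_normK ?num_real.
- by rewrite -v_U.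
- by rewrite (sqr_sqrtr (ltW gamma_gt0)) (sqr_sqrtr (ltW tq_gt0)).
Qed.

Lemma sample_size_noise_le (R : realType) (C0 theta gamma L M t : R) (p : nat) :
  0 <= C0 -> 0 < theta -> 0 < gamma < 1 -> 0 < t -> 0 <= L -> 0 < M ->
  128 * C0 ^+ 2 * (1 + theta) ^+ 2
    / (theta ^+ 2 * gamma ^+ 2 * (1 - Num.sqrt gamma) ^+ 2)
    * p.+1%:R * t^-1 ^+ 2 * L <= M ->
  8 * (C0 * (1 + theta) * Num.sqrt ((2 * p).+1%:R * L / M))
    <= theta * gamma * (1 - Num.sqrt gamma) * t.
Proof.
move=> C0_ge0 theta_gt0 /andP [gamma_gt0 gamma_lt1] t_gt0 L_ge0 M_gt0 M_ge.
have g_lt1 : Num.sqrt gamma < 1 by rewrite -sqrtr1 ltr_sqrt.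
set D := theta ^+ 2 * gamma ^+ 2 * (1 - Num.sqrt gamma) ^+ 2.
have D_gt0 : 0 < D by rewrite !mulr_gt0 ?exprn_gt0 ?subr_gt0.
set K := C0 ^+ 2 * (1 + theta) ^+ 2 * L.
have K_ge0 : 0 <= K by rewrite /K mulr_ge0 // mulr_ge0 // sqr_ge0.
have {}M_ge : 128 * K * p.+1%:R <= M * (D * t ^+ 2).
  have -> : 128 * K * p.+1%:R = 128 * C0 ^+ 2 * (1 + theta) ^+ 2 / D
      * p.+1%:R * t^-1 ^+ 2 * L * (D * t ^+ 2).
    by rewrite /K; field; rewrite (gt_eqF t_gt0) (gt_eqF D_gt0).
  by rewrite ler_pM2r // mulr_gt0 ?exprn_gt0.
have p_le : ((2 * p).+1%:R : R) <= 2 * p.+1%:R by rewrite -natrM ler_nat; lia.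
have X_ge0 : 0 <= (2 * p).+1%:R * L / M.
  by rewrite !mulr_ge0 ?ler0n ?invr_ge0 // ltW.
have lhs_ge0 : 0 <= 8 * (C0 * (1 + theta) * Num.sqrt ((2 * p).+1%:R * L / M)).
  by rewrite !mulr_ge0 ?sqrtr_ge0 // addr_ge0 // ltW.
have rhs_ge0 : 0 <= theta * gamma * (1 - Num.sqrt gamma) * t.
  by rewrite !mulr_ge0 ?subr_ge0 ?ltW.
rewrite -ler_sqr ?nnegrE // -(ler_pM2r M_gt0).
have -> : (8 * (C0 * (1 + theta) * Num.sqrt ((2 * p).+1%:R * L / M))) ^+ 2 * M
    = 64 * K * (2 * p).+1%:R.
  by rewrite !exprMn sqr_sqrtr // /K; field; rewrite gt_eqF.
have -> : (theta * gamma * (1 - Num.sqrt gamma) * t) ^+ 2 * M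
    = M * (D * t ^+ 2) by rewrite /D; ring.
have := ler_wpM2l K_ge0 p_le.
lra.
Qed.

Section SampleCovariance.
Variables (R : realType) (n m : nat) (x : 'I_m -> 'cV[R]_n).
Variables (theta : R) (v : 'cV[R]_n).

Lemma Gamma_hat_sym : (Gamma_hat x)^T = Gamma_hat x.
Proof.
rewrite /Gamma_hat linearB linearZ /= trmx1 linear_sum /=.
by congr (_ *: _ - _); apply: eq_bigr => i _; rewrite trmx_mul trmxK.
Qed.

Lemma Gamma_hat_spiked : Gamma_hat x = W_mat theta v x + theta *: (v *m v^T).
Proof. by rewrite /W_mat subrK. Qed.

Lemma W_mat_sym : (W_mat theta v x)^T = W_mat theta v x.
Proof. by rewrite /W_mat linearB linearZ /= trmx_mul trmxK Gamma_hat_sym. Qed.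

Lemma event_E_spec_le (C0 : R) (S : {set 'I_n}) q :
  0 <= C0 -> 0 <= theta -> (0 < n)%N -> event_E C0 theta v x ->
  (0 < #|S|)%N -> (#|S| <= q)%N ->
  spec_norm_sub (W_mat theta v x) S
    <= C0 * (1 + theta) * Num.sqrt (q%:R * ln (n%:R : R) / m%:R).
Proof.
move=> C0_ge0 theta_ge0 n_gt0 hE S_gt0 S_le; apply: le_trans (hE S S_gt0) _.
rewrite ler_wpM2l ?mulr_ge0 ?addr_ge0 //; apply: ler_wsqrtr.
by rewrite ler_wpM2r ?invr_ge0 // ler_wpM2r ?ln_ge0 ?ler1n // ler_nat.
Qed.

End SampleCovariance.

Theorem proposition4 (R : realType) (C0 : R) :
  0 < C0 ->
  exists C : R, 0 < C /\
  forall (n m k p : nat) (theta gamma : R) (v : 'cV[R]_n)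
         (x : 'I_m -> 'cV[R]_n) (Sp Sp1 : {set 'I_n}) (e : 'cV[R]_n),
    (2 <= n)%N -> (1 <= m)%N -> 0 < theta -> (1 <= k <= n)%N ->
    norm2 v = 1 -> (nnz v <= k)%N ->
    event_E C0 theta v x ->
    (1 <= p)%N -> (p < k)%N -> 0 < gamma < 1 ->
    #|Sp| = p ->
    top_sub_eigvec (Gamma_hat x) Sp e ->
    top_abs_set (Gamma_hat x *m e) p.+1 Sp1 ->
    C * (1 + theta) ^+ 2 / (theta ^+ 2 * gamma ^+ 2 * (1 - Num.sqrt gamma) ^+ 2)
      * (p.+1)%:R * s_fun v p.+1 ^+ 2 * ln (n%:R : R) <= m%:R ->
    Num.sqrt (gamma / s_fun v p) <= normS Sp v ->
    Num.sqrt (gamma / s_fun v p.+1) <= normS Sp1 v.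
Proof.
move=> C0_gt0; exists (128 * C0 ^+ 2); split; first by rewrite mulr_gt0 ?exprn_gt0.
move=> n m k p theta gamma v x Sp Sp1 e n_ge2 m_ge1 theta_gt0 /andP [_ k_le_n]
  v1 _ hE p_ge1 p_lt_k gamma01 card_Sp e_top Sp1_top m_ge v_Sp.
have v_neq0 : v != 0.
  apply/eqP => v0; move: v1; rewrite v0 /norm2 normS0 => /esym/eqP.
  by rewrite oner_eq0.
rewrite !s_funE !invrK in v_Sp *.
rewrite (Gamma_hat_spiked x theta v) in e_top Sp1_top.
pose d := C0 * (1 + theta) * Num.sqrt ((2 * p).+1%:R * ln (n%:R : R) / m%:R).
apply: (spiked_support_recovery (d := d) (W_mat_sym x theta v) theta_gt0
  gamma01 v_neq0 p_ge1 (leq_trans p_lt_k k_le_n) card_Sp _ e_top Sp1_top _ v_Sp).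
- move=> S S_gt0 S_le.
  by apply: event_E_spec_le => //; [exact: ltW | exact: ltW | lia].
- apply: sample_size_noise_le m_ge => //.
  + exact: ltW.
  + exact: top_sqr_sum_gt0.
  + by rewrite ln_ge0 // ler1n; lia.
  + by rewrite ltr0n.
Qed.
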